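(* Let $\mathcal G$ be a network with out-degree vector $w$, $h\in\mathbb R^{\mathcal V}$, and assume $\mathcal G$ is $h$-indecomposable. Consider the coordination game on $\mathcal G$ with external field $h$. Then: (i) if $|h|\le w$, then $\mathcal X^*_h=\{\pm\mathbf 1\}$ and it is globally I-stable; (ii) if $|h|<w$, then $\mathcal X^*_h=\{\pm\mathbf 1\}$ and it is globally BR-stable; (iii) if $w\ngeq a h$ for some $a\in\{\pm1\}$, then $\mathcal X^*_h=\{a\mathbf 1\}$ and it is globally BR-stable.
   Context: A network is $\mathcal G=(\mathcal V,\mathcal E,W)$ with finite node set $\mathcal V$, links $\mathcal E\subseteq\mathcal V\times\mathcal V$, weight matrix $W\in\mathbb R_+^{\mathcal V\times\mathcal V}$ with zero diagonal, $W_{ij}>0$ iff $(i,j)\in\mathcal E$; for $\mathcal S\subseteq\mathcal V$, $w_i^{\mathcal S}=\sum_{j\in\mathcal S}W_{ij}$; $w=W\mathbf 1$. $\mathcal X=\{-1,+1\}^{\mathcal V}$. Componentwise order: $x\le y$ iff $x_i\le y_i$ for all $i$, $x<y$ iff $x_i<y_i$ for all $i$, $x\ngeq y$ iff $x_i<y_i$ for some $i$; $|h|$ is the entrywise absolute value. $h$-indecomposable: for every partition $\mathcal V=\mathcal V^+\cup\mathcal V^-$ into two disjoint nonempty sets there exist $s\in\{-,+\}$ and $i\in\mathcal V^s$ with $w_i^{\mathcal V^s}+s\,h_i<w_i^{\mathcal V^{-s}}$ ($s\,h_i$ is $\pm h_i$ according to $s$, $-s$ is the opposite sign). Coordination game with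 external field $h$: players $\mathcal V$, actions $\{\pm1\}$, utilities $u_i(x)=x_i(\sum_jW_{ij}x_j+h_i)$; equilibria $x^*$ with $x^*_i$ maximizing $u_i(\cdot,x^*_{-i})$, set $\mathcal X^*_h$. An admissible path is a sequence $x^{(0)},\dots,x^{(l)}$ ($l\ge0$) with consecutive configurations differing exactly in the action of one player $i_k$; it is an I-path if $u_{i_k}(x^{(k)})>u_{i_k}(x^{(k-1)})$ for all $k$, a BR-path if $u_{i_k}(x^{(k)})\ge u_{i_k}(x^{(k-1)})$ for all $k$. For $\alpha\in\{\mathrm I,\mathrm{BR}\}$, $\mathcal Y\subseteq\mathcal X$ is globally $\alpha$-stable if from every $x\in\mathcal X$ there is an $\alpha$-path to some element of $\mathcal Y$, and there is no $\alpha$-path from any $y\in\mathcal Y$ to any $z\notin\mathcal Y$. *)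

From mathcomp Require Import all_boot all_order all_algebra.
Set Implicit Arguments. Unset Strict Implicit. Unset Printing Implicit Defensive.
Import Order.TTheory GRing.Theory Num.Theory.
Local Open Scope ring_scope.

Section Game.
Variables (V : finType) (R : realFieldType).
Variables (W : V -> V -> R) (h : V -> R).

(* A network: nonnegative weights, zero diagonal; the link set is
   {(i,j) | W i j > 0}, hence determined by W. *)
Definition network := (forall i j, 0 <= W i j) /\ (forall i, W i i = 0).

Definition wS (S : {set V}) (i : V) : R := \sum_(j in S) W i j.
Definition wdeg (i : V) : R := \sum_j W i j.

(* h-indecomposability: for every partition V = V+ u V- (V+ = A, V- = ~: A)
   into disjoint nonempty sets there are s and i in V^s with
   w_i^{V^s} + s h_i < w_i^{V^{-s}}. *)
Definition h_indecomposable : Prop :=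
  forall A : {set V}, A != set0 -> ~: A != set0 ->
    (exists2 i, i \in A & wS A i + h i < wS (~: A) i) \/
    (exists2 i, i \in ~: A & wS (~: A) i - h i < wS A i).

Definition config := {ffun V -> bool}.
Definition sgn (b : bool) : R := if b then 1 else -1.
Definition cfg (x : config) (i : V) : R := sgn (x i).

Definition allc (a : bool) : config := [ffun=> a].

Definition util (i : V) (x : config) : R :=
  cfg x i * (\sum_j W i j * cfg x j + h i).

Definition upd (x : config) (i : V) (b : bool) : config :=
  [ffun j => if j == i then b else x j].

Definition is_equilibrium (x : config) : bool :=
  [forall i, forall b, util i (upd x i b) <= util i x].

Definition Xstar : {set config} := [set x | is_equilibrium x].

Definition differ_at (x y : config) (i : V) : bool :=
  (x i != y i) && [forall j, (j != i) ==> (x j == y j)].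

Definition Istep : rel config :=
  fun x y => [exists i, differ_at x y i && (util i x < util i y)].
Definition BRstep : rel config :=
  fun x y => [exists i, differ_at x y i && (util i x <= util i y)].

Definition reach (step : rel config) (x y : config) : Prop :=
  exists p : seq config, path step x p /\ last x p = y.

Definition globally_stable (step : rel config) (Y : {set config}) : Prop :=
  (forall x, exists2 y, y \in Y & reach step x y) /\
  (forall y z, y \in Y -> z \notin Y -> ~ reach step y z).

End Game.

From mathcomp Require Import all_boot all_order all_algebra.
From mathcomp Require Import lra.
Import Order.TTheory GRing.Theory Num.Theory.
Local Open Scope ring_scope.
Set Implicit Arguments. Unset Strict Implicit. Unset Printing Implicit Defensive.

(* Write field k x = sum_j W_kj x_j + h_k for the local field felt by player k,
   so that u_k(x) = x_k * field k x.  Since W has zero diagonal, field k x does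
   not depend on x_k; hence a unilateral deviation of k flips the sign of u_k,
   an improvement step of k is possible iff x_k * field k x < 0 (a weak best
   response step iff <= 0), and x is an equilibrium iff x_k * field k x >= 0
   for every k.  The field is monotone in x, which yields the key dynamic fact:
   from every x an improvement path reaches an equilibrium (first switch off
   unsupported +1 players, then switch on supported -1 players, each phase
   decreasing a counter).  h-indecomposability forces every equilibrium to be
   a consensus a1, and a1 is an equilibrium iff 0 <= w_k + a h_k for all k.
   Global stability then follows since no step leaves an equilibrium (a strict
   one for BR-steps); in case (iii) strictness comes from a "frozen player"
   argument run from a configuration that is a1 except at one player. *)

Lemma sgnN (R : realFieldType) (b : bool) : sgn R (~~ b) = - sgn R b.
Proof. by case: b; rewrite /sgn ?opprK. Qed.

Lemma sgnK (R : realFieldType) (b : bool) : sgn R b * sgn R b = 1.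
Proof. by case: b; rewrite /sgn ?mulN1r ?opprK ?mulr1. Qed.

Lemma sgn_ge_Nnorm (R : realFieldType) (b : bool) (r : R) :
  - `|r| <= sgn R b * r.
Proof.
have := ler_norm r; have := ler_norm (- r); rewrite normrN.
by case: b; rewrite /sgn ?mul1r ?mulN1r; lra.
Qed.

Section Reachability.
Variables (V : finType) (step : rel (config V)).

Lemma reach_refl (x : config V) : reach step x x.
Proof. by exists [::]. Qed.

Lemma reach_cons (x y z : config V) :
  step x y -> reach step y z -> reach step x z.
Proof. by move=> sxy [p [pp lp]]; exists (y :: p); rewrite /= sxy pp. Qed.

Lemma reach_trans (x y z : config V) :
  reach step x y -> reach step y z -> reach step x z.
Proof.
move=> [p [pp <-]] [q [pq <-]]; exists (p ++ q).
by rewrite cat_path last_cat pp pq.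
Qed.

Lemma reach_sub (step' : rel (config V)) (x y : config V) :
  subrel step step' -> reach step x y -> reach step' x y.
Proof. by move=> sub [p [pp lp]]; exists p; split => //; exact: sub_path pp. Qed.

Lemma reach_stuck (x y : config V) :
  (forall z, ~~ step x z) -> reach step x y -> y = x.
Proof.
move=> stuck [[|z p] [pp <-]] //=; move: pp => /= /andP [sxz _].
by have := stuck z; rewrite sxz.
Qed.

Lemma reach_descent (S T : pred (config V)) (mu : config V -> nat) :
  (forall x, S x -> ~~ T x -> exists2 y, step x y & S y && (mu y < mu x)%N) ->
  forall x, S x -> exists2 y, reach step x y & T y.
Proof.
move=> descent x; move: (leqnn (mu x)); move: {2}(mu x) => n.
elim: n x => [|n IH] x le_mu Sx; case: (boolP (T x)) => Tx;
  try by exists x => //; exact: reach_refl.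
- by have [y _ /andP [_]] := descent x Sx Tx; rewrite ltnNge (leq_trans le_mu).
- have [y sxy /andP [Sy lt_mu]] := descent x Sx Tx.
  have [z r Tz] := IH y (leq_trans lt_mu le_mu) Sy.
  by exists z => //; exact: reach_cons sxy r.
Qed.

End Reachability.

Section Coordination.
Variables (V : finType) (R : realFieldType) (W : V -> V -> R) (h : V -> R).
Hypothesis netW : network W.

Definition field (k : V) (x : config V) : R := \sum_j W k j * cfg R x j + h k.

Definition flip (x : config V) (k : V) : config V := upd x k (~~ x k).

Lemma flip_self (x : config V) k : flip x k k = ~~ x k.
Proof. by rewrite /flip /upd ffunE eqxx. Qed.

Lemma flip_other (x : config V) k j : j != k -> flip x k j = x j.
Proof. by rewrite /flip /upd ffunE => /negbTE ->. Qed.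

(* Zero diagonal: one's own action does not influence one's field. *)
Lemma field_upd k (x : config V) b : field k (upd x k b) = field k x.
Proof.
case: netW => _ W0; rewrite /field; congr (_ + _); apply: eq_bigr => j _.
by rewrite /cfg /upd ffunE; case: eqP => [->|//]; rewrite W0 !mul0r.
Qed.

Lemma util_flip k (x : config V) : util W h k (flip x k) = - util W h k x.
Proof.
by rewrite /util -/(field k _) -/(field k x) field_upd /cfg flip_self sgnN mulNr.
Qed.

Lemma util_field k (x : config V) : util W h k x = sgn R (x k) * field k x.
Proof. by []. Qed.

Lemma equilibriumE (x : config V) :
  is_equilibrium W h x = [forall k, 0 <= sgn R (x k) * field k x].
Proof.
apply: eq_forallb => k; rewrite -util_field.
apply/forallP/idP => [/(_ (~~ x k)) | ge0 b].
  by rewrite -/(flip x k) util_flip; lra.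
case: (eqVneq b (x k)) => [->|neq].
  by have -> : upd x k (x k) = x by apply/ffunP => j; rewrite ffunE; case: eqP => [->|].
have -> : b = ~~ x k by move: neq; case: b; case: (x k).
by rewrite -/(flip x k) util_flip; lra.
Qed.

Lemma differ_atP (x y : config V) k : reflect (y = flip x k) (differ_at x y k).
Proof.
apply: (iffP andP) => [[neq /forallP same] | ->].
  apply/ffunP => j; case: (eqVneq j k) => [->|jk]; rewrite ?flip_self.
    by move: neq; case: (x k); case: (y k).
  by rewrite flip_other //; have /implyP/(_ jk)/eqP := same j.
split; first by rewrite flip_self; case: (x k).
by apply/forallP => j; apply/implyP => jk; rewrite flip_other.
Qed.

Lemma IstepP (x y : config V) :
  reflect (exists2 k, y = flip x k & sgn R (x k) * field k x < 0) (Istep W h x y).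
Proof.
apply: (iffP existsP) => [[k /andP [/differ_atP -> lt]] | [k -> lt]]; exists k => //.
  by move: lt; rewrite util_flip util_field; lra.
by apply/andP; split; [exact/differ_atP | rewrite util_flip util_field; lra].
Qed.

Lemma BRstepP (x y : config V) :
  reflect (exists2 k, y = flip x k & sgn R (x k) * field k x <= 0) (BRstep W h x y).
Proof.
apply: (iffP existsP) => [[k /andP [/differ_atP -> le]] | [k -> le]]; exists k => //.
  by move: le; rewrite util_flip util_field; lra.
by apply/andP; split; [exact/differ_atP | rewrite util_flip util_field; lra].
Qed.

Lemma Istep_BRstep : subrel (Istep W h) (BRstep W h).
Proof. by move=> x y /IstepP [k -> lt]; apply/BRstepP; exists k => //; exact: ltW. Qed.

Lemma field_mono k (x y : config V) :
  (forall j, x j -> y j) -> field k x <= field k y.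
Proof.
case: netW => W0 _ xy; rewrite /field lerD2r; apply: ler_sum => j _.
apply: ler_wpM2l => //; rewrite /cfg /sgn.
by case: (x j) (xy j) => [->//|]; case: (y j) => // _; lra.
Qed.

Lemma field_bounds k (a : bool) (z : config V) :
  - wdeg W k + sgn R a * h k <= sgn R a * field k z <= wdeg W k + sgn R a * h k.
Proof.
case: netW => W0 _.
have lo : - wdeg W k <= \sum_j W k j * cfg R z j.
  rewrite /wdeg -sumrN; apply: ler_sum => j _.
  by rewrite /cfg /sgn; case: (z j); rewrite ?mulr1 ?mulrN1 //; have := W0 k j; lra.
have hi : \sum_j W k j * cfg R z j <= wdeg W k.
  rewrite /wdeg; apply: ler_sum => j _.
  by rewrite /cfg /sgn; case: (z j); rewrite ?mulr1 ?mulrN1 //; have := W0 k j; lra.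
by rewrite /field mulrDr; case: a; rewrite /sgn ?mul1r ?mulN1r; apply/andP; split; lra.
Qed.

Lemma field_allc k (a : bool) :
  sgn R a * field k (allc V a) = wdeg W k + sgn R a * h k.
Proof.
rewrite /field /wdeg mulrDr mulr_sumr; congr (_ + _); apply: eq_bigr => j _.
by rewrite /cfg ffunE mulrCA sgnK mulr1.
Qed.

Lemma allc_equilibriumE (a : bool) :
  is_equilibrium W h (allc V a) = [forall k, 0 <= wdeg W k + sgn R a * h k].
Proof. by rewrite equilibriumE; apply: eq_forallb => k; rewrite ffunE field_allc. Qed.

(* Flipping a player strictly decreases the number of players sharing her
   former action; this is the measure of both phases of the dynamics. *)
Lemma card_flip (x : config V) k b : x k = b ->
  (#|[set j | flip x k j == b]| < #|[set j | x j == b]|)%N.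
Proof.
move=> <-; apply: proper_card; apply/properP; split.
  apply/subsetP => j; rewrite !inE; case: (eqVneq j k) => [->|jk].
    by rewrite flip_self; case: (x k).
  by rewrite flip_other.
by exists k; rewrite !inE ?flip_self ?eqxx //; case: (x k).
Qed.

Definition plus_supported (x : config V) : bool :=
  [forall k, x k ==> (0 <= field k x)].

Lemma reach_plus_supported (x : config V) :
  exists2 y, reach (Istep W h) x y & plus_supported y.
Proof.
apply: (@reach_descent _ _ predT _ (fun y => #|[set j | y j == true]|)) => // {}x _.
rewrite negb_forall => /existsP [k]; rewrite negb_imply -ltNge => /andP [xk lt].
exists (flip x k); last exact: card_flip.
by apply/IstepP; exists k; rewrite // xk /sgn mul1r.
Qed.

(* Switching on a supported -1 player keeps the state supported, by monotonicity. *)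
Lemma plus_supported_flip (x : config V) k :
  plus_supported x -> x k = false -> 0 <= field k x -> plus_supported (flip x k).
Proof.
move=> /forallP sup xk ge0; apply/forallP => j; apply/implyP.
have up : forall i, x i -> flip x k i.
  by move=> i; case: (eqVneq i k) => [->|ik]; rewrite ?xk // flip_other.
case: (eqVneq j k) => [->|jk]; first by rewrite /flip field_upd.
rewrite flip_other // => xj; apply: le_trans (field_mono j up).
by have /implyP := sup j; apply.
Qed.

Lemma reach_equilibrium_supported (x : config V) : plus_supported x ->
  exists2 y, reach (Istep W h) x y & is_equilibrium W h y.
Proof.
apply: (@reach_descent _ _ _ _ (fun y => #|[set j | y j == false]|)) => {}x sup.
rewrite equilibriumE negb_forall => /existsP [k]; rewrite -ltNge => lt.
have xk : x k = false.
  apply/negbTE/negP => xk; move/forallP/(_ k): sup; rewrite xk /= => ge0.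
  by move: lt; rewrite xk /sgn mul1r; lra.
exists (flip x k); first by apply/IstepP; exists k.
rewrite card_flip // andbT plus_supported_flip //.
by move: lt; rewrite xk /sgn; lra.
Qed.

Lemma reach_equilibrium (x : config V) :
  exists2 y, reach (Istep W h) x y & is_equilibrium W h y.
Proof.
have [y rxy sup] := reach_plus_supported x.
have [z ryz eqz] := reach_equilibrium_supported sup.
by exists z => //; exact: reach_trans rxy ryz.
Qed.

(* Generic stability criterion for the equilibrium set: it is reached by
   improvement paths, so it suffices that no step leaves it. *)
Lemma globally_stable_Xstar (step : rel (config V)) :
  subrel (Istep W h) step ->
  (forall y z, y \in Xstar W h -> ~~ step y z) ->
  globally_stable step (Xstar W h).
Proof.
move=> sub no_exit; split.
  move=> x; have [y r e] := reach_equilibrium x.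
  by exists y; [rewrite inE | exact: reach_sub r].
move=> y z yX zX r; have ezy := reach_stuck (no_exit y ^~ yX) r.
by move: zX; rewrite ezy yX.
Qed.

Lemma Istable : globally_stable (Istep W h) (Xstar W h).
Proof.
apply: globally_stable_Xstar => // y z; rewrite inE equilibriumE => /forallP ge0.
by apply/negP => /IstepP [k _ lt]; have := ge0 k; lra.
Qed.

Lemma reach_frozen k (x y : config V) : reach (Istep W h) x y ->
  (forall z : config V, z k = x k -> 0 <= sgn R (x k) * field k z) -> y k = x k.
Proof.
move=> [p [pp <-]]; elim: p x pp => [|z p IHp] x //= /andP [/IstepP [i ez lt] pp] frz.
have zk : z k = x k.
  rewrite ez; case: (eqVneq k i) => [eki|nki]; last by rewrite flip_other.
  by subst i; have := frz x erefl; lra.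
by rewrite (IHp z pp) // => u uk; rewrite zk; apply: frz; rewrite uk.
Qed.

Lemma field_split (y : config V) k :
  field k y = wS W [set j | y j] k - wS W (~: [set j | y j]) k + h k.
Proof.
rewrite /field /wS; congr (_ + _).
rewrite (bigID (fun j => j \in [set j | y j])) /= -sumrN; congr (_ + _).
  by apply: eq_bigr => j; rewrite inE /cfg => ->; rewrite /sgn mulr1.
apply: eq_big => [j|j]; first by rewrite !inE.
by rewrite inE /cfg => /negbTE ->; rewrite /sgn mulrN1.
Qed.

Hypothesis indecW : h_indecomposable W h.

Lemma equilibrium_consensus (y : config V) :
  is_equilibrium W h y -> exists b, y = allc V b.
Proof.
rewrite equilibriumE => /forallP ge0; set A := [set j | y j].
case: (eqVneq A set0) => [A0 | An0].
  exists false; apply/ffunP => j; rewrite ffunE.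
  by move/setP/(_ j): A0; rewrite !inE; case: (y j).
case: (eqVneq (~: A) set0) => [C0 | Cn0].
  exists true; apply/ffunP => j; rewrite ffunE.
  by move/setP/(_ j): C0; rewrite !inE; case: (y j).
case: (indecW An0 Cn0) => [[i iA lt] | [i iC lt]]; have := ge0 i; rewrite field_split -/A.
  by move: iA; rewrite inE => ->; rewrite /sgn mul1r; lra.
by move: iC; rewrite !inE => /negbTE ->; rewrite /sgn mulN1r; lra.
Qed.

Lemma BRstable_strict :
  (forall b k, allc V b \in Xstar W h -> 0 < wdeg W k + sgn R b * h k) ->
  globally_stable (BRstep W h) (Xstar W h).
Proof.
move=> strict; apply: globally_stable_Xstar; first exact: Istep_BRstep.
move=> y z yX; have [b eyb] : exists b, y = allc V b.
  by apply: equilibrium_consensus; rewrite inE in yX.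
apply/negP => /BRstepP [k _]; rewrite eyb ffunE field_allc.
by have := strict b k; rewrite -eyb => /(_ yX); lra.
Qed.

Lemma Xstar_pm : (forall k, `|h k| <= wdeg W k) ->
  Xstar W h = [set allc V true; allc V false].
Proof.
move=> le; apply/setP => x; rewrite !inE; apply/idP/idP.
  by move/equilibrium_consensus => [[|] ->]; rewrite eqxx ?orbT.
have eq_allc b : is_equilibrium W h (allc V b).
  rewrite allc_equilibriumE; apply/forallP => k.
  by have := le k; have := sgn_ge_Nnorm b (h k); lra.
by case/orP => /eqP ->.
Qed.

(* Case (iii): a player with w_i < a h_i makes every player strictly prefer a
   in the a-consensus.  Otherwise some k has w_k + a h_k <= 0; start from a1
   with k switched to -a: along an improvement path to an equilibrium both i
   and k are frozen, so that equilibrium is no consensus, a contradiction. *)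
Lemma consensus_strict (a : bool) i : wdeg W i < sgn R a * h i ->
  forall k, 0 < wdeg W k + sgn R a * h k.
Proof.
move=> lt_i k; rewrite ltNge; apply/negP => le_k.
have w0 : 0 <= wdeg W i by case: netW => W0 _; apply: sumr_ge0.
have ik : i != k by apply/eqP => eik; subst k; lra.
set x := flip (allc V a) k.
have [y r /equilibrium_consensus [b eyb]] := reach_equilibrium x.
have xi : x i = a by rewrite /x flip_other // ffunE.
have yi : y i = x i.
  apply: (reach_frozen r) => z _; rewrite xi.
  by case/andP: (field_bounds i a z); lra.
have yk : y k = x k.
  apply: (reach_frozen r) => z _; rewrite /x flip_self ffunE sgnN mulNr.
  by case/andP: (field_bounds k a z); lra.
by move: yi yk; rewrite xi /x flip_self eyb !ffunE => ->; case: (a).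
Qed.

Lemma Xstar_single (a : bool) i : wdeg W i < sgn R a * h i ->
  Xstar W h = [set allc V a].
Proof.
move=> lt_i; apply/setP => x; rewrite !inE; apply/idP/idP; last first.
  move/eqP ->; rewrite allc_equilibriumE; apply/forallP => k.
  exact/ltW/(consensus_strict lt_i).
move=> ex; have [b exb] := equilibrium_consensus ex; subst x.
case: (eqVneq b a) => [-> // | ba]; move: ex.
have -> : b = ~~ a by move: ba; case: (a); case: b.
rewrite allc_equilibriumE => /forallP/(_ i); rewrite sgnN mulNr => ge0; exfalso; lra.
Qed.

End Coordination.

Theorem corollary1 (V : finType) (R : realFieldType)
    (W : V -> V -> R) (h : V -> R) :
  network W -> h_indecomposable W h ->
  [/\ (forall i, `|h i| <= wdeg W i) ->
        Xstar W h = [set allc V true; allc V false] /\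
        globally_stable (Istep W h) (Xstar W h),
      (forall i, `|h i| < wdeg W i) ->
        Xstar W h = [set allc V true; allc V false] /\
        globally_stable (BRstep W h) (Xstar W h)
    & forall a : bool, (exists i, wdeg W i < sgn R a * h i) ->
        Xstar W h = [set allc V a] /\
        globally_stable (BRstep W h) (Xstar W h)].
Proof.
move=> netW indecW; split.
- by move=> le; split; [exact: Xstar_pm | exact: Istable].
- move=> lt; split; first by apply: Xstar_pm => // k; exact: ltW.
  apply: BRstable_strict => // b k _.
  by have := lt k; have := sgn_ge_Nnorm b (h k); lra.
- move=> a [i lt_i]; have EX := Xstar_single netW indecW lt_i.
  split => //; apply: BRstable_strict => // b k.
  rewrite EX inE => /eqP/ffunP/(_ i); rewrite !ffunE => ->.
  exact: consensus_strict lt_i k.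
Qed.
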